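(* Fix $\epsilon>0$, $\delta>0$ and an integer $L\geq 2$ such that $2\epsilon<\delta\leq 1/L$. Then the minimum number of queries $N^*(\epsilon,\delta,L)$ of an $(\epsilon,\delta,L)$-private learner strategy satisfies \[ \max\Big\{\log\frac{1}{\epsilon},\ \log\frac{\delta}{\epsilon}+2L-4\Big\}\ \leq\ N^*(\epsilon,\delta,L)\ \leq\ \log\frac{1}{L\epsilon}+2L . \]
   Context: Private sequential learning model. An unknown true value $v^*\in[0,1)$. A learner submits queries $q_k\in[0,1)$ and receives responses $r_k=\mathbb{I}(v^*\geq q_k)$. A learner strategy $\phi$ of length $N$ uses a random seed $Y$ uniformly distributed on $\{1,2,\dots,\mathcal{Y}\}$ (for a large integer $\mathcal{Y}$) and consists of query functions $\phi_1,\dots,\phi_N$ and an estimation function $\phi^E$: $q_1=\phi_1(Y)$, $q_k=\phi_k(r_1,\dots,r_{k-1},Y)$ for $k=2,\dots,N$, and the estimate is $\hat x=\phi^E(r_1,\dots,r_N,Y)\in[0,1)$; queries within a run are distinct. $\Phi_N$ denotes the set of all such strategies of length $N$. Write $\hat x(x,y)$ for the estimate when $v^*=x$, $Y=y$. For $x\in[0,1)$, let $\mathcal{Q}(x)=\{\overline q\in[0,1)^N:\mathbb{P}(Q_x=\overline q)>0\}$, where $Q_x$ is the (random, through $Y$) query sequence when $v^*=x$. The adversary's information set for $\overline q$ is $\mathcal{I}(\overline q)=\{x\in[0,1):\overline q\in\mathcal{Q}(x)\}$. A set $\mathcal{E}\subset\mathbb{R}$ is $(\delta,L)$-coverable if it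 is contained in a union of $L$ closed intervals each of length at most $\delta$; its $\delta$-cover number $C_\delta(\mathcal{E})$ is the least $L\in\mathbb{N}$ such that $\mathcal{E}$ is $(\delta,L)$-coverable. A strategy $\phi\in\Phi_N$ is $(\epsilon,\delta,L)$-private (for $L\geq2$ integer) if (1) $\mathbb{P}(|\hat x(x,Y)-x|\leq\epsilon/2)=1$ for all $x\in[0,1)$, and (2) $C_\delta(\mathcal{I}(\overline q))\geq L$ for every $x\in[0,1)$ and every $\overline q\in\mathcal{Q}(x)$. $N^*(\epsilon,\delta,L)=\min\{N\in\mathbb{N}:\Phi_N\text{ contains an }(\epsilon,\delta,L)\text{-private strategy}\}$. All logarithms are base 2, and non-integer quantities in the bounds are understood rounded up to the nearest integer (e.g., $\lceil\log(1/(L\epsilon))\rceil$). *)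

From Stdlib Require Import Reals Lra Lia List ClassicalEpsilon ClassicalDescription.
Import ListNotations.
Open Scope R_scope.

Definition log2 (x : R) : R := ln x / ln 2.
(* up y is the unique integer z with y < z <= y + 1, so  -(up(-x) - 1) = ceil x *)
Definition Rceil (x : R) : Z := (- (up (- x) - 1))%Z.

Definition resp (v : R) (q : R) : bool := if Rle_dec q v then true else false.

(** The random seed Y is uniform on
    {1, ..., nseeds}; query k (0-indexed, k < N) is [qf k h y], where h is
    the list of the k previous responses r_1..r_k and y the seed; the
    estimate is [est h y] with h the list of all N responses. *)
Record strategy (N : nat) := Strategy {
  nseeds : nat;
  nseeds_pos : (0 < nseeds)%nat;
  qf : nat -> list bool -> nat -> R;
  est : list bool -> nat -> R;
  qf_range : forall k h y, 0 <= qf k h y < 1;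
  est_range : forall h y, 0 <= est h y < 1
}.
Arguments nseeds {N}.
Arguments qf {N}.
Arguments est {N}.

Fixpoint hist {N} (s : strategy N) (x : R) (y : nat) (k : nat) : list bool :=
  match k with
  | O => []
  | S k' => let h := hist s x y k' in h ++ [resp x (qf s k' h y)]
  end.

Definition queries {N} (s : strategy N) (x : R) (y : nat) : list R :=
  map (fun k => qf s k (hist s x y k) y) (seq 0 N).
Definition xhat {N} (s : strategy N) (x : R) (y : nat) : R :=
  est s (hist s x y N) y.

Definition distinct_queries {N} (s : strategy N) : Prop :=
  forall x y, 0 <= x < 1 -> (1 <= y <= nseeds s)%nat -> NoDup (queries s x y).

Definition seed_prob {N} (s : strategy N) (S : nat -> Prop) : R :=
  INR (length (filter (fun y => if excluded_middle_informative (S y) then true else false)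
                      (seq 1 (nseeds s)))) / INR (nseeds s).

Definition Qset {N} (s : strategy N) (x : R) (qs : list R) : Prop :=
  seed_prob s (fun y => queries s x y = qs) > 0.

Definition info_set {N} (s : strategy N) (qs : list R) (x : R) : Prop :=
  0 <= x < 1 /\ Qset s x qs.

Definition coverable (E : R -> Prop) (delta : R) (L : nat) : Prop :=
  exists a b : nat -> R,
    (forall i, (i < L)%nat -> a i <= b i /\ b i - a i <= delta) /\
    (forall x, E x -> exists i, (i < L)%nat /\ a i <= x <= b i).

Definition cover_number (E : R -> Prop) (delta : R) : nat :=
  epsilon (inhabits 0%nat)
    (fun L => coverable E delta L /\ forall L', coverable E delta L' -> (L <= L')%nat).

Definition is_private {N} (s : strategy N) (eps delta : R) (L : nat) : Prop :=
  distinct_queries s /\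
  (forall x, 0 <= x < 1 -> seed_prob s (fun y => Rabs (xhat s x y - x) <= eps / 2) = 1) /\
  (forall x qs, 0 <= x < 1 -> Qset s x qs -> (L <= cover_number (info_set s qs) delta)%nat).

Definition Nstar (eps delta : R) (L : nat) : nat :=
  epsilon (inhabits 0%nat)
    (fun N => (exists s : strategy N, is_private s eps delta L) /\
              forall N', (exists s : strategy N', is_private s eps delta L) -> (N <= N')%nat).

(* Fix a seed.  Accuracy forces the runs at points more than [eps] apart to
   differ, and points of [[0, b]] are only separated by queries in [(0, b]]; counting response
   patterns, at least [log (b / eps)] queries fall in [(0, b]], which for [b = 1] gives
   [log (1 / eps)].  Every candidate point of the information set lies in a gap of width
   [<= eps] between consecutive queries, so the information set is covered by [[0, delta]] and
   one interval of width [2 eps <= delta] per two queries above [delta]; privacy then needs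
   [2L - 4] queries above [delta], leaving the others to locate [v*] inside [[0, delta]].

   Cut [[0, 1)] into [L] blocks, each made of a tiny decoy part followed by a gap.
   A point in a gap is located by bisection; a point in a decoy part imitates, using the seed,
   the bisection run of a point in a random gap.  So every query sequence is produced by a
   decoy point of each of the [L] blocks, and these points are more than [1 / L >= delta] apart. *)

From Stdlib Require Import Reals Lra Lia List ZArith Wf_nat.
From Stdlib Require Import Classical ClassicalEpsilon ClassicalDescription.
Import ListNotations.
Open Scope R_scope.

Lemma nat_least_exists (P : nat -> Prop) :
  (exists n, P n) -> exists n, P n /\ forall m, P m -> (n <= m)%nat.
Proof.
  intros HP.
  destruct (dec_inh_nat_subset_has_unique_least_element P (fun n => classic (P n)) HP)
    as [n [Hn _]].
  exists n. exact Hn.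
Qed.

Section SeedProbability.
Context {N : nat} (s : strategy N) (S : nat -> Prop).

Let indicator (y : nat) : bool := if excluded_middle_informative (S y) then true else false.

Lemma indicator_true y : indicator y = true <-> S y.
Proof. unfold indicator. destruct (excluded_middle_informative (S y)); intuition congruence. Qed.

Lemma seed_prob_eq1 : seed_prob s S = 1 <-> forall y, (1 <= y <= nseeds s)%nat -> S y.
Proof.
  unfold seed_prob. fold indicator.
  assert (Hn : 0 < INR (nseeds s)) by (apply lt_0_INR, nseeds_pos).
  split.
  - intros H y Hy. apply indicator_true.
    assert (Hlen : length (filter indicator (seq 1 (nseeds s))) = length (seq 1 (nseeds s))).
    { rewrite length_seq. apply INR_eq.
      apply (Rmult_eq_compat_r (INR (nseeds s))) in H.
      unfold Rdiv in H. rewrite Rmult_assoc, Rinv_l, Rmult_1_r, Rmult_1_l in H by lra.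
      exact H. }
    apply filter_length_forallb, forallb_forall with (x := y) in Hlen; [exact Hlen|].
    apply in_seq. lia.
  - intros H. rewrite forallb_filter_id, length_seq by
      (apply forallb_forall; intros y Hy; apply indicator_true, H; apply in_seq in Hy; lia).
    field. lra.
Qed.

Lemma seed_prob_pos : seed_prob s S > 0 <-> exists y, (1 <= y <= nseeds s)%nat /\ S y.
Proof.
  unfold seed_prob. fold indicator.
  assert (Hn : 0 < INR (nseeds s)) by (apply lt_0_INR, nseeds_pos).
  split.
  - intros H. destruct (filter indicator (seq 1 (nseeds s))) as [|y l] eqn:E.
    + simpl in H. lra.
    + assert (Hy : In y (filter indicator (seq 1 (nseeds s)))) by (rewrite E; left; reflexivity).
      apply filter_In in Hy as [Hy HSy]. apply in_seq in Hy.
      exists y. split; [lia|]. apply indicator_true, HSy.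
  - intros [y [Hy HSy]]. apply Rdiv_lt_0_compat; [|exact Hn].
    apply lt_0_INR. destruct (filter indicator (seq 1 (nseeds s))) eqn:E; [|simpl; lia].
    assert (Hin : In y (filter indicator (seq 1 (nseeds s)))).
    { apply filter_In. split; [apply in_seq; lia|]. apply indicator_true, HSy. }
    rewrite E in Hin. destruct Hin.
Qed.

End SeedProbability.

Section Coverability.
Implicit Types (E : R -> Prop) (d : R) (n : nat).

Lemma cover_number_spec E d n :
  coverable E d n ->
  coverable E d (cover_number E d) /\ forall n', coverable E d n' -> (cover_number E d <= n')%nat.
Proof. intros H. unfold cover_number. apply epsilon_spec, nat_least_exists. eauto. Qed.

Lemma coverable_empty E d : (forall x, ~ E x) -> coverable E d 0.
Proof.
  intros H. exists (fun _ => 0), (fun _ => 0). split; [intros; lia|].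
  intros x Ex. destruct (H x Ex).
Qed.

Lemma coverable_interval E d lo hi :
  lo <= hi -> hi - lo <= d -> (forall x, E x -> lo <= x <= hi) -> coverable E d 1.
Proof.
  intros Hlo Hd H. exists (fun _ => lo), (fun _ => hi). split; [auto|].
  intros x Ex. exists 0%nat. split; [lia|auto].
Qed.

Lemma coverable_subset E E' d n :
  (forall x, E x -> E' x) -> coverable E' d n -> coverable E d n.
Proof. intros HS [a [b [H1 H2]]]. exists a, b. split; auto. Qed.

Lemma coverable_le_width E d d' n : d <= d' -> coverable E d n -> coverable E d' n.
Proof.
  intros Hd [a [b [H1 H2]]]. exists a, b. split; [|auto].
  intros i Hi. specialize (H1 i Hi). lra.
Qed.

Lemma coverable_le_count E d n n' : 0 <= d -> (n <= n')%nat -> coverable E d n -> coverable E d n'.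
Proof.
  intros Hd Hn [a [b [H1 H2]]].
  exists (fun i => if Nat.ltb i n then a i else 0), (fun i => if Nat.ltb i n then b i else 0).
  split.
  - intros i Hi. destruct (Nat.ltb_spec i n); [auto|lra].
  - intros x Ex. destruct (H2 x Ex) as [i [Hi Hx]]. exists i. split; [lia|].
    destruct (Nat.ltb_spec i n); [auto|lia].
Qed.

Lemma coverable_union E1 E2 d n1 n2 :
  coverable E1 d n1 -> coverable E2 d n2 -> coverable (fun x => E1 x \/ E2 x) d (n1 + n2).
Proof.
  intros [a1 [b1 [H1 H2]]] [a2 [b2 [H3 H4]]].
  exists (fun i => if Nat.ltb i n1 then a1 i else a2 (i - n1)%nat),
         (fun i => if Nat.ltb i n1 then b1 i else b2 (i - n1)%nat).
  split.
  - intros i Hi. destruct (Nat.ltb_spec i n1); [auto|]. apply H3. lia.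
  - intros x [Ex|Ex].
    + destruct (H2 x Ex) as [i [Hi Hx]]. exists i. split; [lia|].
      destruct (Nat.ltb_spec i n1); [auto|lia].
    + destruct (H4 x Ex) as [i [Hi Hx]]. exists (n1 + i)%nat. split; [lia|].
      destruct (Nat.ltb_spec (n1 + i) n1); [lia|].
      replace (n1 + i - n1)%nat with i by lia. exact Hx.
Qed.

Lemma coverable_below E d n : 0 <= d ->
  (forall x, E x -> 0 <= x < INR n * d) -> coverable E d n.
Proof.
  intros Hd. revert E. induction n as [|n IH]; intros E H.
  - apply coverable_empty. intros x Ex. specialize (H x Ex). simpl in H. lra.
  - rewrite <- Nat.add_1_r.
    apply coverable_subset
      with (fun x => (E x /\ x < INR n * d) \/ (INR n * d <= x <= INR n * d + d)).
    { intros x Ex. specialize (H x Ex). rewrite S_INR in H.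
      destruct (Rlt_le_dec x (INR n * d)); [left|right]; auto; lra. }
    apply coverable_union.
    + apply IH. intros x [Ex Hx]. specialize (H x Ex). lra.
    + apply coverable_interval with (INR n * d) (INR n * d + d); auto; lra.
Qed.

Lemma coverable_unit_interval E d : 0 < d -> (forall x, E x -> 0 <= x < 1) ->
  exists n, coverable E d n.
Proof.
  intros Hd H. destruct (archimed (/ d)) as [Hup _].
  assert (Hup0 : (0 <= up (/ d))%Z).
  { apply le_IZR. pose proof (Rinv_0_lt_compat d Hd). simpl. lra. }
  exists (Z.to_nat (up (/ d))). apply coverable_below; [lra|].
  intros x Ex. specialize (H x Ex).
  rewrite INR_IZR_INZ, Z2Nat.id by exact Hup0.
  apply (Rmult_lt_compat_r d) in Hup; [|exact Hd]. rewrite Rinv_l in Hup by lra. lra.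
Qed.

(* Pigeonhole: each interval of width [d] contains at most one of the points. *)
Lemma coverable_separated E d n (z : nat -> R) k :
  (forall j, (j < k)%nat -> E (z j)) ->
  (forall j j', (j < k)%nat -> (j' < k)%nat -> j <> j' -> d < Rabs (z j - z j')) ->
  coverable E d n -> (k <= n)%nat.
Proof.
  intros HE Hz [a [b [H1 H2]]].
  assert (Hc : forall j, exists i, (j < k)%nat -> (i < n)%nat /\ a i <= z j <= b i).
  { intros j. destruct (Nat.lt_ge_cases j k) as [Hj|Hj].
    - destruct (H2 _ (HE j Hj)) as [i Hi]. exists i. auto.
    - exists 0%nat. intros; lia. }
  destruct (choice _ Hc) as [f Hf].
  assert (HN : NoDup (map f (seq 0 k))).
  { apply NoDup_map_NoDup_ForallPairs; [|apply seq_NoDup].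
    intros j j' Hj Hj' Heq. apply in_seq in Hj, Hj'.
    destruct (Nat.eq_dec j j') as [|Hne]; [assumption|exfalso].
    specialize (Hz j j' ltac:(lia) ltac:(lia) Hne).
    destruct (Hf j ltac:(lia)) as [_ Hj1]. destruct (Hf j' ltac:(lia)) as [Hi Hj2].
    rewrite Heq in Hj1. specialize (H1 _ Hi).
    unfold Rabs in Hz. destruct (Rcase_abs (z j - z j')); lra. }
  apply NoDup_incl_length with (l' := seq 0 n) in HN.
  - rewrite length_map, !length_seq in HN. exact HN.
  - intros i Hi. apply in_map_iff in Hi as [j [<- Hj]]. apply in_seq in Hj.
    apply in_seq. specialize (Hf j ltac:(lia)). lia.
Qed.

End Coverability.

Section Histories.
Context {N : nat} (s : strategy N).

Definition queries_upto (x : R) (y k : nat) : list R :=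
  map (fun j => qf s j (hist s x y j) y) (seq 0 k).

Lemma queries_upto_S x y k :
  queries_upto x y (S k) = queries_upto x y k ++ [qf s k (hist s x y k) y].
Proof. unfold queries_upto. rewrite seq_S, map_app. reflexivity. Qed.

Lemma queries_upto_length x y k : length (queries_upto x y k) = k.
Proof. unfold queries_upto. rewrite length_map, length_seq. reflexivity. Qed.

Lemma queries_length x y : length (queries s x y) = N.
Proof. apply queries_upto_length. Qed.

Lemma queries_range x y q : In q (queries s x y) -> 0 <= q < 1.
Proof. unfold queries. intros Hq. apply in_map_iff in Hq as [k [<- _]]. apply qf_range. Qed.

Lemma hist_length x y k : length (hist s x y k) = k.
Proof. induction k as [|k IH]; [reflexivity|]. simpl. rewrite length_app, IH. simpl. lia. Qed.

Lemma hist_resp x y k : hist s x y k = map (resp x) (queries_upto x y k).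
Proof. induction k as [|k IH]; [reflexivity|]. rewrite queries_upto_S, map_app, <- IH. reflexivity. Qed.

Lemma hist_prefix x y j k : (j <= k)%nat -> firstn j (hist s x y k) = hist s x y j.
Proof.
  induction k as [|k IH]; intros Hjk.
  - replace j with 0%nat by lia. reflexivity.
  - destruct (Nat.eq_dec j (S k)) as [->|Hne].
    + apply firstn_all2. rewrite hist_length. lia.
    + simpl. rewrite firstn_app, hist_length.
      replace (j - k)%nat with 0%nat by lia. rewrite app_nil_r. apply IH. lia.
Qed.

Lemma hist_eq_prefix x x' y j k : (j <= k)%nat ->
  hist s x y k = hist s x' y k -> hist s x y j = hist s x' y j.
Proof. intros Hjk H. rewrite <- !(hist_prefix _ y j k Hjk), H. reflexivity. Qed.

Lemma queries_upto_eq x x' y k :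
  hist s x y k = hist s x' y k -> queries_upto x y k = queries_upto x' y k.
Proof.
  intros H. apply map_ext_in. intros j Hj. apply in_seq in Hj.
  rewrite (hist_eq_prefix x x' y j k) by (lia || exact H). reflexivity.
Qed.

Lemma hist_eq_of_resp x x' y k :
  (forall q, In q (queries_upto x' y k) -> resp x q = resp x' q) -> hist s x y k = hist s x' y k.
Proof.
  induction k as [|k IH]; intros H; [reflexivity|].
  rewrite queries_upto_S in H. simpl.
  rewrite IH by (intros q Hq; apply H, in_or_app; left; exact Hq).
  f_equal. f_equal. apply H, in_or_app. right. left. reflexivity.
Qed.

Lemma hist_const_between x y lo hi :
  lo <= x < hi ->
  (forall q, In q (queries s x y) -> q <= lo \/ hi <= q) ->
  forall z, lo <= z < hi -> hist s z y N = hist s x y N.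
Proof.
  intros Hx Hq z Hz. apply hist_eq_of_resp. intros q Hin.
  unfold resp. destruct (Hq q Hin); destruct (Rle_dec q z), (Rle_dec q x); auto; lra.
Qed.

(* Points of [[0, b]] can only be separated by queries in the window [(0, b]]. *)
Definition in_window (b q : R) : bool :=
  if Rlt_dec 0 q then (if Rle_dec q b then true else false) else false.

Definition window_responses (b x : R) (y k : nat) : list bool :=
  map (resp x) (filter (in_window b) (queries_upto x y k)).

Lemma window_responses_differ b x x' y k :
  0 <= x <= b -> 0 <= x' <= b -> hist s x y k <> hist s x' y k ->
  exists i, (i < length (window_responses b x y k))%nat /\
            (i < length (window_responses b x' y k))%nat /\
            nth i (window_responses b x y k) false <> nth i (window_responses b x' y k) false.
Proof.
  intros Hx Hx'. induction k as [|k IH]; intros Hne; [contradiction|].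
  unfold window_responses. rewrite !queries_upto_S, !filter_app, !map_app.
  destruct (list_eq_dec Bool.bool_dec (hist s x y k) (hist s x' y k)) as [Heq|Hne'].
  - set (q := qf s k (hist s x' y k) y).
    assert (Hr : resp x q <> resp x' q).
    { intros Hr. apply Hne. simpl. rewrite Heq. fold q. rewrite Hr. reflexivity. }
    assert (HQ := queries_upto_eq x x' y k Heq).
    assert (Hw : map (resp x) (filter (in_window b) (queries_upto x y k))
               = map (resp x') (filter (in_window b) (queries_upto x' y k))).
    { rewrite <- HQ. apply map_ext_in. intros a Ha. apply filter_In in Ha as [Ha _].
      rewrite !hist_resp, <- HQ in Heq. exact (ext_in_map Heq a Ha). }
    assert (Hwin : in_window b q = true).
    { unfold in_window. unfold resp in Hr.
      destruct (Rlt_dec 0 q), (Rle_dec q b); auto; exfalso; apply Hr;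
        destruct (Rle_dec q x), (Rle_dec q x'); auto; lra. }
    rewrite Heq. fold q. cbn [filter]. rewrite Hwin, Hw. cbn [map].
    exists (length (map (resp x') (filter (in_window b) (queries_upto x' y k)))).
    rewrite !length_app, !nth_middle. simpl. repeat split; [lia|lia|exact Hr].
  - destruct (IH Hne') as [i [H1 [H2 H3]]]. unfold window_responses in H1, H2, H3. exists i.
    rewrite !length_app, !app_nth1 by assumption. repeat split; [lia|lia|exact H3].
Qed.

End Histories.

Lemma Rabs_INR_sub_ge1 i j : i <> j -> 1 <= Rabs (INR i - INR j).
Proof.
  intros Hij. destruct (Nat.lt_total i j) as [Hlt|[Heq|Hlt]]; [|contradiction|];
    apply le_INR in Hlt; rewrite S_INR in Hlt; unfold Rabs; destruct (Rcase_abs _); lra.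
Qed.

Fixpoint bool_lists (n : nat) : list (list bool) :=
  match n with
  | O => [[]]
  | S n => map (cons true) (bool_lists n) ++ map (cons false) (bool_lists n)
  end.

Lemma bool_lists_length n : length (bool_lists n) = (2 ^ n)%nat.
Proof. induction n as [|n IH]; [reflexivity|]. simpl. rewrite length_app, !length_map, IH. lia. Qed.

Lemma in_bool_lists l : In l (bool_lists (length l)).
Proof.
  induction l as [|b l IH]; [left; reflexivity|].
  simpl. apply in_or_app. destruct b; [left|right]; apply in_map, IH.
Qed.

Lemma NoDup_bool_lists_le (C : list (list bool)) M :
  NoDup C -> (forall c, In c C -> length c = M) -> (length C <= 2 ^ M)%nat.
Proof.
  intros HC Hlen. rewrite <- bool_lists_length. apply NoDup_incl_length; [exact HC|].
  intros c Hc. rewrite <- (Hlen c Hc). apply in_bool_lists.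
Qed.

Section AccurateSeed.
Context {N : nat} (s : strategy N) (eps : R) (y : nat).
Hypothesis accurate : forall x, 0 <= x < 1 -> Rabs (xhat s x y - x) <= eps / 2.

Lemma hist_separates x x' :
  0 <= x < 1 -> 0 <= x' < 1 -> eps < Rabs (x - x') -> hist s x y N <> hist s x' y N.
Proof.
  intros Hx Hx' Hsep Heq.
  assert (Hhat : xhat s x y = xhat s x' y) by (unfold xhat; rewrite Heq; reflexivity).
  pose proof (accurate x Hx) as Ax. pose proof (accurate x' Hx') as Ax'. rewrite Hhat in Ax.
  revert Hsep Ax Ax'. unfold Rabs. repeat destruct (Rcase_abs _); lra.
Qed.

Definition window_code (b : R) (M : nat) (x : R) : list bool :=
  window_responses s b x y N ++ repeat false (M - length (window_responses s b x y N)).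

Lemma window_code_separates b M x x' :
  0 <= x <= b -> 0 <= x' <= b -> b < 1 -> eps < Rabs (x - x') ->
  window_code b M x <> window_code b M x'.
Proof.
  intros Hx Hx' Hb Hsep Hcode.
  assert (Hne : hist s x y N <> hist s x' y N) by (apply hist_separates; lra).
  destruct (window_responses_differ s b x x' y N Hx Hx' Hne) as [i [Hi [Hi' Hdiff]]].
  apply Hdiff. unfold window_code in Hcode.
  rewrite <- (app_nth1 _ (repeat false (M - length (window_responses s b x y N))) false Hi),
    <- (app_nth1 _ (repeat false (M - length (window_responses s b x' y N))) false Hi'), Hcode.
  reflexivity.
Qed.

(* Accuracy forces [2^M + 1] points of [[0, b]] at mutual distance [> eps] to receive
   distinct codes of [M] bits. *)
Lemma window_count_bound b M :
  0 < eps -> 0 <= b < 1 ->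
  (forall x, 0 <= x <= b -> (length (filter (in_window b) (queries s x y)) <= M)%nat) ->
  b <= 2 ^ M * eps.
Proof.
  intros Heps Hb Hwin. destruct (Rle_lt_dec b (2 ^ M * eps)) as [|Hgt]; [assumption|exfalso].
  assert (HK : 0 < 2 ^ M) by (apply pow_lt; lra).
  assert (Hb0 : 0 < b) by nra.
  set (h := b / 2 ^ M).
  assert (Hh : eps < h) by (unfold h; apply (Rmult_lt_reg_r (2 ^ M)); [lra|]; field_simplify; lra).
  set (pt := fun i : nat => INR i * h).
  assert (Hpt : forall i, (i <= 2 ^ M)%nat -> 0 <= pt i <= b).
  { intros i Hi. apply le_INR in Hi. rewrite pow_INR in Hi. replace (INR 2) with 2 in Hi by (simpl; lra).
    pose proof (pos_INR i). unfold pt, h. split.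
    - apply Rmult_le_pos; [lra|]. left. apply Rdiv_lt_0_compat; lra.
    - apply Rle_trans with (2 ^ M * (b / 2 ^ M)); [|right; field; lra].
      apply Rmult_le_compat_r; [left; apply Rdiv_lt_0_compat|]; lra. }
  assert (HN : NoDup (map (fun i => window_code b M (pt i)) (seq 0 (S (2 ^ M))))).
  { apply NoDup_map_NoDup_ForallPairs; [|apply seq_NoDup].
    intros i j Hi Hj Hcode. apply in_seq in Hi, Hj.
    destruct (Nat.eq_dec i j) as [|Hij]; [assumption|exfalso].
    refine (window_code_separates b M (pt i) (pt j) (Hpt i _) (Hpt j _) _ _ Hcode);
      [lia|lia|lra|].
    unfold pt. rewrite <- Rmult_minus_distr_r, Rabs_mult, (Rabs_right h) by lra.
    pose proof (Rabs_INR_sub_ge1 i j Hij). nra. }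
  apply NoDup_bool_lists_le with (M := M) in HN.
  - rewrite length_map, length_seq in HN. lia.
  - intros c Hc. apply in_map_iff in Hc as [i [<- Hi]]. apply in_seq in Hi.
    unfold window_code. rewrite length_app, repeat_length.
    specialize (Hwin (pt i) (Hpt i ltac:(lia))).
    unfold window_responses. rewrite length_map. unfold queries in Hwin.
    fold (queries_upto s (pt i) y N) in Hwin. lia.
Qed.

End AccurateSeed.

Lemma list_min_exists (P : list R) : P <> [] -> exists p, In p P /\ forall q, In q P -> p <= q.
Proof.
  induction P as [|a P IH]; intros HP; [congruence|].
  destruct P as [|b P'].
  - exists a. split; [left; reflexivity|]. intros q [<-|[]]; lra.
  - destruct IH as [p [Hp Hmin]]; [discriminate|].
    destruct (Rle_dec a p).
    + exists a. split; [left; reflexivity|]. intros q [<-|Hq]; [lra|]. specialize (Hmin q Hq). lra.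
    + exists p. split; [right; exact Hp|]. intros q [<-|Hq]; [lra|auto].
Qed.

Definition in_gaps (eps t : R) (P : list R) (E : R -> Prop) : Prop :=
  forall x, E x -> exists lo hi, lo <= x < hi /\ hi - lo <= eps /\ In hi P /\
    (In lo P \/ lo <= t) /\ (forall p, In p P -> ~ (lo < p < hi)).

Section Gaps.
Variables (eps t : R) (P : list R) (E : R -> Prop) (p1 : R).
Hypotheses (gaps : in_gaps eps t P E) (above_t : forall p, In p P -> t < p)
  (p1_in : In p1 P) (p1_min : forall q, In q P -> p1 <= q).

Lemma in_gaps_near_min c :
  (forall q, In q P -> q <> p1 -> c <= q) ->
  forall x, E x -> x < c -> p1 - eps <= x <= p1 + eps.
Proof.
  intros Hc x Ex Hxc. destruct (gaps x Ex) as [lo [hi [Hx [Hw [Hhi [Hlo Hgap]]]]]].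
  destruct (Req_EM_T hi p1) as [->|Hhi1]; [lra|].
  assert (Hp1hi : p1 < hi) by (specialize (p1_min hi Hhi); lra).
  assert (Hp1lo : p1 <= lo) by (apply Rnot_lt_le; intros Hlt; exact (Hgap p1 p1_in (conj Hlt Hp1hi))).
  destruct (Req_EM_T lo p1) as [->|Hlo1]; [lra|exfalso].
  destruct Hlo as [Hlo|Hlo].
  - specialize (Hc lo Hlo Hlo1). lra.
  - specialize (above_t p1 p1_in). lra.
Qed.

Lemma in_gaps_remove_two p2 :
  In p2 (remove Req_EM_T p1 P) -> (forall q, In q (remove Req_EM_T p1 P) -> p2 <= q) ->
  in_gaps eps p2 (remove Req_EM_T p2 (remove Req_EM_T p1 P)) (fun x => E x /\ p2 <= x).
Proof.
  intros Hp2 Hp2min. apply in_remove in Hp2 as Hp2'. destruct Hp2' as [Hp2P Hp21].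
  assert (Hp12 : p1 < p2) by (specialize (p1_min p2 Hp2P); lra).
  assert (Hin : forall q, In q P -> q <> p1 -> q <> p2 ->
                  In q (remove Req_EM_T p2 (remove Req_EM_T p1 P))).
  { intros q Hq Hq1 Hq2. apply in_in_remove; [exact Hq2|]. apply in_in_remove; assumption. }
  intros x [Ex Hx]. destruct (gaps x Ex) as [lo [hi [Hxlh [Hw [Hhi [Hlo Hgap]]]]]].
  assert (Hp2lo : p2 <= lo) by (apply Rnot_lt_le; intros Hlt; apply (Hgap p2 Hp2P); lra).
  exists lo, hi. repeat split; try tauto.
  - apply Hin; [exact Hhi|lra|lra].
  - destruct (Req_EM_T lo p2) as [->|Hlo2]; [right; lra|left].
    destruct Hlo as [Hlo|Hlo]; [|specialize (above_t p1 p1_in); lra].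
    apply Hin; [exact Hlo|lra|exact Hlo2].
  - intros p Hp. apply in_remove in Hp as [Hp _]. apply in_remove in Hp as [Hp _]. exact (Hgap p Hp).
Qed.

End Gaps.

(* Two consecutive points [p1 < p2] of [P] can share one interval [[p1 - eps, p1 + eps]]:
   a gap ending at [p2] must start at [p1]. *)
Lemma in_gaps_coverable eps t P E :
  0 <= eps -> (forall p, In p P -> t < p) -> in_gaps eps t P E ->
  coverable E (2 * eps) ((length P + 1) / 2).
Proof.
  intros Heps. remember (length P) as n eqn:Hn. revert P t E Hn.
  induction n as [n IH] using lt_wf_ind. intros P t E -> Ht Hg.
  destruct P as [|p P0]; [apply coverable_empty; intros x Ex;
    destruct (Hg x Ex) as [lo [hi [_ [_ [[] _]]]]]|].
  destruct (list_min_exists (p :: P0)) as [p1 [Hp1 Hp1min]]; [discriminate|].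
  set (P := p :: P0) in *.
  pose proof (remove_length_lt Req_EM_T P p1 Hp1) as HP1.
  destruct (remove Req_EM_T p1 P) as [|q Q] eqn:HR.
  - apply coverable_le_count with 1%nat;
      [lra|apply (Nat.Div0.div_le_mono 2 (S (length P0) + 1) 2); simpl; lia|].
    apply coverable_interval with (p1 - eps) (p1 + eps); [lra|lra|].
    intros x Ex. apply (in_gaps_near_min eps t P E p1 Hg Ht Hp1 Hp1min (x + 1)); [|exact Ex|lra].
    intros r Hr Hr1. assert (Hin : In r (remove Req_EM_T p1 P)) by (apply in_in_remove; assumption).
    rewrite HR in Hin. destruct Hin.
  - rewrite <- HR in *.
    destruct (list_min_exists (remove Req_EM_T p1 P)) as [p2 [Hp2 Hp2min]]; [rewrite HR; discriminate|].
    pose proof (remove_length_lt Req_EM_T _ p2 Hp2) as HP2.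
    apply coverable_subset with (fun x => (E x /\ x < p2) \/ (E x /\ p2 <= x)).
    { intros x Ex. destruct (Rlt_le_dec x p2); auto. }
    apply coverable_le_count with (1 + (length (remove Req_EM_T p2 (remove Req_EM_T p1 P)) + 1) / 2)%nat;
      [lra| |apply coverable_union].
    + rewrite <- (Nat.div_add_l 1 2) by lia. apply Nat.Div0.div_le_mono; lia.
    + apply coverable_interval with (p1 - eps) (p1 + eps); [lra|lra|].
      intros x [Ex Hx]. apply (in_gaps_near_min eps t P E p1 Hg Ht Hp1 Hp1min p2); [|exact Ex|exact Hx].
      intros r Hr Hr1. apply Hp2min, in_in_remove; assumption.
    + eapply IH; [|reflexivity| |exact (in_gaps_remove_two eps t P E p1 Hg Ht Hp1 Hp1min p2 Hp2 Hp2min)];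
        [lia|].
      intros r Hr. apply in_remove in Hr as [Hr Hr2].
      destruct (Hp2min r Hr) as [|Heq]; [assumption|congruence].
Qed.

Lemma hist_const_width {N} (s : strategy N) eps y x lo hi :
  (forall z, 0 <= z < 1 -> Rabs (xhat s z y - z) <= eps / 2) ->
  0 <= lo -> lo < hi -> hi <= 1 ->
  (forall z, lo <= z < hi -> hist s z y N = hist s x y N) -> hi - lo <= eps.
Proof.
  intros Hacc Hlo Hlohi Hhi Hconst.
  assert (Heps : 0 <= eps)
    by (pose proof (Hacc lo ltac:(lra)); pose proof (Rabs_pos (xhat s lo y - lo)); lra).
  apply Rnot_lt_le. intros Hwide.
  set (z := (lo + eps + hi) / 2).
  assert (Hhat : xhat s z y = xhat s lo y).
  { unfold xhat. rewrite (Hconst z), (Hconst lo) by (unfold z; lra). reflexivity. }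
  pose proof (Hacc z ltac:(unfold z; lra)) as Az. pose proof (Hacc lo ltac:(lra)) as Alo.
  rewrite Hhat in Az. revert Az Alo. unfold z, Rabs. repeat destruct (Rcase_abs _); lra.
Qed.

Lemma accurate_of_private {N} (s : strategy N) eps delta L y x :
  is_private s eps delta L -> (1 <= y <= nseeds s)%nat -> 0 <= x < 1 ->
  Rabs (xhat s x y - x) <= eps / 2.
Proof. intros [_ [Hacc _]] Hy Hx. exact (proj1 (seed_prob_eq1 s _) (Hacc x Hx) y Hy). Qed.

Lemma nearest_below (Q : list R) x : 0 <= x ->
  exists lo, (lo = 0 \/ In lo Q) /\ lo <= x /\ forall q, In q Q -> q <= x -> q <= lo.
Proof.
  intros Hx. induction Q as [|a Q [lo [Hlo [Hlox Hmax]]]].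
  - exists 0. repeat split; [left; reflexivity|exact Hx|intros q []].
  - destruct (Rle_dec a x) as [Hax|Hax]; [destruct (Rle_dec a lo) as [Halo|Halo]|].
    + exists lo. repeat split; [simpl; tauto|exact Hlox|].
      intros q [<-|Hq] Hqx; auto.
    + exists a. repeat split; [simpl; tauto|exact Hax|].
      intros q [<-|Hq] Hqx; [lra|]. specialize (Hmax q Hq Hqx). lra.
    + exists lo. repeat split; [simpl; tauto|exact Hlox|].
      intros q [<-|Hq] Hqx; [lra|auto].
Qed.

Lemma nearest_above (Q : list R) x : x < 1 ->
  exists hi, (hi = 1 \/ In hi Q) /\ x < hi /\ forall q, In q Q -> x < q -> hi <= q.
Proof.
  intros Hx. induction Q as [|a Q [hi [Hhi [Hxhi Hmin]]]].
  - exists 1. repeat split; [left; reflexivity|exact Hx|intros q []].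
  - destruct (Rlt_dec x a) as [Hax|Hax]; [destruct (Rle_dec hi a) as [Hhia|Hhia]|].
    + exists hi. repeat split; [simpl; tauto|exact Hxhi|].
      intros q [<-|Hq] Hqx; auto.
    + exists a. repeat split; [simpl; tauto|exact Hax|].
      intros q [<-|Hq] Hqx; [lra|]. specialize (Hmin q Hq Hqx). lra.
    + exists hi. repeat split; [simpl; tauto|exact Hxhi|].
      intros q [<-|Hq] Hqx; [lra|auto].
Qed.

(* On the gap around [x] the run that produced [Q] is constant, so accuracy makes it narrow. *)
Lemma info_set_gap {N} (s : strategy N) eps delta L Q x :
  is_private s eps delta L -> info_set s Q x ->
  exists lo hi, (lo = 0 \/ In lo Q) /\ (hi = 1 \/ In hi Q) /\ lo <= x < hi /\ hi <= 1 /\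
    hi - lo <= eps /\ forall q, In q Q -> q <= lo \/ hi <= q.
Proof.
  intros Hpriv [Hx HQ]. apply seed_prob_pos in HQ as [y [Hy HQ]].
  destruct (nearest_below Q x ltac:(lra)) as [lo [Hlo [Hlox Hmax]]].
  destruct (nearest_above Q x ltac:(lra)) as [hi [Hhi [Hxhi Hmin]]].
  assert (Hsplit : forall q, In q Q -> q <= lo \/ hi <= q).
  { intros q Hq. destruct (Rle_lt_dec q x); [left; auto|right; auto]. }
  assert (Hrange : forall q, In q Q -> 0 <= q < 1) by (rewrite <- HQ; apply queries_range).
  assert (Hlo0 : 0 <= lo) by (destruct Hlo as [->|Hlo]; [lra|apply Hrange, Hlo]).
  assert (Hhi1 : hi <= 1) by (destruct Hhi as [->|Hhi]; [lra|apply Rlt_le, Hrange, Hhi]).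
  exists lo, hi. repeat split; try assumption.
  apply (hist_const_width s eps y x); try assumption; [|lra|].
  - intros z Hz. apply (accurate_of_private s eps delta L); assumption.
  - apply hist_const_between; [lra|]. rewrite HQ. exact Hsplit.
Qed.

Definition gtb (d q : R) : bool := if Rlt_dec d q then true else false.

(* The information set is covered by [[0, delta]] together with one interval of width
   [2 eps <= delta] per pair of consecutive queries above [delta]. *)
Lemma info_set_coverable {N} (s : strategy N) eps delta L Q :
  2 * eps <= delta -> delta < 1 -> is_private s eps delta L ->
  coverable (info_set s Q) delta (1 + (length (filter (gtb delta) Q) + 2) / 2).
Proof.
  intros Hed Hd1 Hpriv.
  assert (Heps : 0 <= eps).
  { pose proof (accurate_of_private s eps delta L 1 0 Hpriv ltac:(pose proof (nseeds_pos _ s); lia)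
      ltac:(lra)). pose proof (Rabs_pos (xhat s 0 1 - 0)). lra. }
  set (P := filter (gtb delta) Q ++ [1]).
  assert (HP : forall p, In p P <-> (In p Q /\ delta < p) \/ p = 1).
  { intros p. unfold P. rewrite in_app_iff, filter_In. unfold gtb. simpl.
    destruct (Rlt_dec delta p); intuition congruence. }
  apply coverable_subset with (fun x => (0 <= x <= delta) \/ (info_set s Q x /\ delta < x)).
  { intros x Hx. destruct (Rle_lt_dec x delta); [left; split; [apply Hx|]|right]; tauto. }
  apply coverable_union; [apply coverable_interval with 0 delta; [lra|lra|tauto]|].
  replace (length (filter (gtb delta) Q) + 2)%nat with (length P + 1)%nat
    by (unfold P; rewrite length_app; simpl; lia).
  apply coverable_le_width with (2 * eps); [exact Hed|].
  apply in_gaps_coverable with delta; [exact Heps|intros p Hp; apply HP in Hp; lra|].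
  intros x [Hx Hdx]. destruct (info_set_gap s eps delta L Q x Hpriv Hx)
    as [lo [hi [Hlo [Hhi [Hxlh [Hhi1 [Hw Hsplit]]]]]]].
  exists lo, hi. repeat split; try lra.
  - apply HP. destruct Hhi as [->|Hhi]; [right; reflexivity|left; split; [exact Hhi|lra]].
  - destruct (Rle_lt_dec lo delta) as [|Hlod]; [right; assumption|left; apply HP; left].
    destruct Hlo as [->|Hlo]; [lra|split; assumption].
  - intros p Hp Hin. apply HP in Hp. destruct Hp as [[Hp _]| ->].
    + destruct (Hsplit p Hp); lra.
    + lra.
Qed.

Lemma private_queries_above {N} (s : strategy N) eps delta L x :
  2 * eps <= delta -> delta < 1 -> is_private s eps delta L -> 0 <= x < 1 ->
  (2 * L - 4 <= length (filter (gtb delta) (queries s x 1)))%nat.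
Proof.
  intros Hed Hd1 Hpriv Hx.
  assert (HQ : Qset s x (queries s x 1)).
  { apply seed_prob_pos. exists 1%nat. split; [pose proof (nseeds_pos _ s); lia|reflexivity]. }
  pose proof (proj2 (proj2 Hpriv) x _ Hx HQ) as HL.
  pose proof (info_set_coverable s eps delta L (queries s x 1) Hed Hd1 Hpriv) as Hcov.
  pose proof (proj2 (cover_number_spec _ _ _ Hcov) _ Hcov) as Hmin.
  pose proof (Nat.Div0.mul_div_le (length (filter (gtb delta) (queries s x 1)) + 2) 2). lia.
Qed.

Lemma filter_disjoint_length {A} (f g : A -> bool) l :
  (forall a, f a = true -> g a = false) ->
  (length (filter f l) + length (filter g l) <= length l)%nat.
Proof.
  intros Hfg. induction l as [|a l IH]; [reflexivity|]. simpl.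
  destruct (f a) eqn:Ef; [rewrite (Hfg a Ef)|destruct (g a)]; simpl; lia.
Qed.

Lemma private_lower_bounds {N} (s : strategy N) eps delta L :
  0 < eps -> 2 * eps < delta -> delta < 1 -> is_private s eps delta L ->
  1 <= 2 ^ N * eps /\ (2 * L - 4 <= N)%nat /\ delta <= 2 ^ (N - (2 * L - 4)) * eps.
Proof.
  intros Heps Hed Hd1 Hpriv.
  assert (Hacc : forall x, 0 <= x < 1 -> Rabs (xhat s x 1 - x) <= eps / 2).
  { intros x Hx. apply (accurate_of_private s eps delta L); [exact Hpriv| |exact Hx].
    pose proof (nseeds_pos _ s). lia. }
  assert (Habove : forall x, 0 <= x < 1 ->
            (2 * L - 4 <= length (filter (gtb delta) (queries s x 1)))%nat).
  { intros x Hx. apply (private_queries_above s eps delta L); [lra|exact Hd1|exact Hpriv|exact Hx]. }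
  split; [|split].
  - apply Rnot_lt_le. intros Hsmall.
    assert (Hpos : 0 <= 2 ^ N * eps) by (apply Rmult_le_pos; [apply pow_le|]; lra).
    assert (Hb : (1 + 2 ^ N * eps) / 2 <= 2 ^ N * eps).
    { apply (window_count_bound s eps 1 Hacc); [exact Heps|lra|].
      intros x _. rewrite <- (queries_length s x 1). apply filter_length_le. }
    lra.
  - specialize (Habove 0 ltac:(lra)).
    pose proof (filter_length_le (gtb delta) (queries s 0 1)). rewrite queries_length in *. lia.
  - apply (window_count_bound s eps 1 Hacc); [exact Heps|lra|].
    intros x Hx. specialize (Habove x ltac:(lra)).
    pose proof (filter_disjoint_length (in_window delta) (gtb delta) (queries s x 1)) as Hdisj.
    rewrite queries_length in Hdisj.
    enough (Hwg : forall q, in_window delta q = true -> gtb delta q = false)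
      by (specialize (Hdisj Hwg); lia).
    intros q. unfold in_window, gtb.
    destruct (Rlt_dec 0 q), (Rle_dec q delta), (Rlt_dec delta q); easy || lra.
Qed.

Lemma Rdiv_le_mono_pos_iff a b c : 0 < c -> a / c <= b / c <-> a <= b.
Proof.
  intros Hc. pose proof (Rinv_0_lt_compat c Hc). unfold Rdiv. split; intros H'.
  - apply Rmult_le_reg_r with (/ c); assumption.
  - apply Rmult_le_compat_r; lra.
Qed.

Lemma Rdiv_lt_mono_pos_iff a b c : 0 < c -> a / c < b / c <-> a < b.
Proof.
  intros Hc. pose proof (Rinv_0_lt_compat c Hc). unfold Rdiv. split; intros H'.
  - apply Rmult_lt_reg_r with (/ c); assumption.
  - apply Rmult_lt_compat_r; assumption.
Qed.

Definition ntrue (l : list bool) : nat := length (filter (fun b => b) l).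

Lemma ntrue_app l l' : ntrue (l ++ l') = (ntrue l + ntrue l')%nat.
Proof. unfold ntrue. rewrite filter_app, length_app. reflexivity. Qed.

Definition count_le (f : nat -> R) (n : nat) (x : R) : nat :=
  ntrue (map (fun j => resp x (f j)) (seq 0 n)).

Lemma count_le_spec (f : nat -> R) n x : (forall i j, (i <= j)%nat -> f i <= f j) ->
  (count_le f n x <= n)%nat /\ forall j, (j < n)%nat -> (f j <= x <-> (j < count_le f n x)%nat).
Proof.
  intros Hf. induction n as [|n [IHle IHspec]]; [split; [reflexivity|intros; lia]|].
  unfold count_le in *. rewrite seq_S, map_app, ntrue_app, Nat.add_0_l. cbn [map].
  set (c := ntrue (map (fun j => resp x (f j)) (seq 0 n))) in *.
  clearbody c. unfold resp. destruct (Rle_dec (f n) x) as [Hn|Hn]; simpl.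
  - assert (Hc : c = n).
    { destruct (Nat.lt_ge_cases c n) as [Hlt|]; [exfalso|lia].
      destruct n as [|n]; [lia|].
      assert (Hfn : f n <= x) by (specialize (Hf n (S n) ltac:(lia)); lra).
      apply IHspec in Hfn; lia. }
    change (ntrue [true]) with 1%nat. rewrite Hc. split; [lia|]. intros j Hj. split; [lia|]. intros _.
    specialize (Hf j n ltac:(lia)). lra.
  - change (ntrue [false]) with 0%nat. rewrite Nat.add_0_r. split; [lia|]. intros j Hj.
    destruct (Nat.eq_dec j n) as [->|Hne]; [split; [lra|lia]|].
    rewrite IHspec by lia. reflexivity.
Qed.

Lemma firstn_S_nth {A} (l : list A) i d :
  (i < length l)%nat -> firstn (S i) l = firstn i l ++ [nth i l d].
Proof.
  revert i. induction l as [|a l IH]; intros i Hi; simpl in Hi; [lia|].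
  destruct i as [|i]; [reflexivity|]. change (a :: firstn (S i) l = a :: (firstn i l ++ [nth i l d])).
  f_equal. apply IH. lia.
Qed.

Definition mid (I : R * R) : R := (fst I + snd I) / 2.

Definition halve (I : R * R) (b : bool) : R * R := if b then (mid I, snd I) else (fst I, mid I).

Definition bisect (I : R * R) (bits : list bool) : R * R := fold_left halve bits I.

Lemma mid_between I : fst I < snd I -> fst I < mid I < snd I.
Proof. unfold mid. lra. Qed.

Lemma bisect_snoc I bits b : bisect I (bits ++ [b]) = halve (bisect I bits) b.
Proof. unfold bisect. rewrite fold_left_app. reflexivity. Qed.

Lemma bisect_spec I bits : fst I < snd I ->
  fst I <= fst (bisect I bits) /\ fst (bisect I bits) < snd (bisect I bits) /\
  snd (bisect I bits) <= snd I /\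
  snd (bisect I bits) - fst (bisect I bits) = (snd I - fst I) / 2 ^ length bits.
Proof.
  unfold bisect. revert I. induction bits as [|b bits IH]; intros I HI; simpl.
  - repeat split; lra.
  - assert (Hh : fst I <= fst (halve I b) /\ fst (halve I b) < snd (halve I b) /\
                 snd (halve I b) <= snd I /\ snd (halve I b) - fst (halve I b) = (snd I - fst I) / 2)
      by (unfold halve, mid; destruct b; simpl; repeat split; lra).
    destruct Hh as [H1 [H2 [H3 H4]]]. destruct (IH (halve I b) H2) as [G1 [G2 [G3 G4]]].
    repeat split; try lra. rewrite G4, H4. field. apply pow_nonzero. lra.
Qed.

(* Once the [i]-th halving has picked a side, every later midpoint lies strictly on that
   side of the [i]-th midpoint. *)
Lemma mid_bisect_prefix_neq I bits i i' : fst I < snd I -> (i < i' < length bits)%nat ->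
  mid (bisect I (firstn i bits)) <> mid (bisect I (firstn i' bits)).
Proof.
  intros HI Hii' Heq.
  set (J := bisect I (firstn i bits)).
  destruct (bisect_spec I (firstn i bits) HI) as [_ [HJ _]]. fold J in HJ.
  set (b := nth i bits false).
  assert (Hhalf : fst (halve J b) < snd (halve J b)) by (unfold halve, mid; destruct b; simpl; lra).
  assert (Hsplit : firstn i' bits = (firstn i bits ++ [b]) ++ skipn (S i) (firstn i' bits)).
  { rewrite <- (firstn_skipn (S i) (firstn i' bits)) at 1. rewrite firstn_firstn.
    replace (Init.Nat.min (S i) i') with (S i) by lia. unfold b. rewrite (firstn_S_nth _ _ false) by lia.
    reflexivity. }
  rewrite Hsplit in Heq. unfold bisect at 2 in Heq. rewrite fold_left_app in Heq.
  fold (bisect I (firstn i bits ++ [b])) in Heq. rewrite bisect_snoc in Heq. fold J in Heq.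
  fold (bisect (halve J b) (skipn (S i) (firstn i' bits))) in Heq.
  destruct (bisect_spec (halve J b) (skipn (S i) (firstn i' bits)) Hhalf) as [K1 [K2 [K3 _]]].
  pose proof (mid_between _ K2).
  unfold halve in *. destruct b; simpl in *; lra.
Qed.

Lemma testbits_surjective (bits : list bool) :
  exists n, (n < 2 ^ length bits)%nat /\ map (Nat.testbit n) (seq 0 (length bits)) = bits.
Proof.
  induction bits as [|b bits [n [Hn Hbits]]]; [exists 0%nat; split; [simpl; lia|reflexivity]|].
  exists (2 * n + Nat.b2n b)%nat. simpl length. split.
  - rewrite Nat.pow_succ_r'. destruct b; simpl; lia.
  - cbn [seq map]. rewrite <- seq_shift, map_map. f_equal.
    + destruct b; [apply Nat.testbit_odd_0|rewrite Nat.add_0_r; apply Nat.testbit_even_0].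
    + rewrite <- Hbits at 2. apply map_ext. intros k. destruct b.
      * apply Nat.testbit_odd_succ. lia.
      * rewrite Nat.add_0_r. apply Nat.testbit_even_succ. lia.
Qed.

Lemma firstn_seq i k n : (i <= n)%nat -> firstn i (seq k n) = seq k i.
Proof.
  intros H. replace n with (i + (n - i))%nat by lia.
  rewrite seq_app, firstn_app, length_seq, Nat.sub_diag, firstn_all2 by (rewrite length_seq; lia).
  apply app_nil_r.
Qed.

Lemma map_seq_shift {A} (f : nat -> A) k n :
  map f (seq k n) = map (fun i => f (k + i)%nat) (seq 0 n).
Proof. induction n as [|n IH]; [reflexivity|]. rewrite !seq_S, !map_app, IH. reflexivity. Qed.

(* Queries [0 .. 2L-1] are the points [j/L] and [(j + 2^-m)/L]; their responses give the block
   of [x] and whether [x] lies in its decoy part.  The last [m] queries bisect the gap of [x],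
   or, when [x] is in a decoy part, the gap and along the path encoded by the seed. *)
Section DecoyStrategy.
Variables (L m : nat).
Hypotheses (HL : (2 <= L)%nat) (Hm : (1 <= m)%nat).

Definition decoy_frac : R := / 2 ^ m.
Definition block_lo (j : nat) : R := INR j / INR L.
Definition decoy_hi (j : nat) : R := (INR j + decoy_frac) / INR L.
Definition gap (g : nat) : R * R := (decoy_hi g, block_lo (S g)).

Definition phase1_query (k : nat) : R := if Nat.ltb k L then block_lo k else decoy_hi (k - L).
Definition blocks_passed (h : list bool) : nat := ntrue (firstn L h).
Definition decoys_passed (h : list bool) : nat := ntrue (firstn L (skipn L h)).
Definition hist_in_decoy (h : list bool) : bool :=
  negb (Nat.eqb (blocks_passed h) (decoys_passed h)).
Definition hist_block (h : list bool) : nat := (blocks_passed h - 1)%nat.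

(* Seed [y] encodes the gap [g] and the path [n] with [y - 1 = g + n L]. *)
Definition seed_gap (y : nat) : nat := ((y - 1) mod L)%nat.
Definition seed_bits (y i : nat) : list bool := map (Nat.testbit ((y - 1) / L)) (seq 0 i).

Definition phase2_query (i : nat) (h : list bool) (y : nat) : R :=
  if hist_in_decoy h then mid (bisect (gap (seed_gap y)) (seed_bits y i))
  else mid (bisect (gap (hist_block h)) (firstn i (skipn (2 * L) h))).
Definition decoy_query (k : nat) (h : list bool) (y : nat) : R :=
  if Nat.ltb k (2 * L) then phase1_query k else phase2_query (k - 2 * L) h y.
Definition decoy_estimate (h : list bool) (y : nat) : R :=
  if hist_in_decoy h then (INR (hist_block h) + decoy_frac / 2) / INR L
  else mid (bisect (gap (hist_block h)) (skipn (2 * L) h)).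

Lemma INR_L_pos : 0 < INR L.
Proof. apply lt_0_INR. lia. Qed.

Lemma decoy_frac_pos : 0 < decoy_frac.
Proof. apply Rinv_0_lt_compat, pow_lt. lra. Qed.

Lemma decoy_frac_lt1 : decoy_frac < 1.
Proof.
  unfold decoy_frac. rewrite <- Rinv_1. apply Rinv_lt_contravar; [rewrite Rmult_1_l; apply pow_lt; lra|].
  replace m with (S (m - 1)) by lia. simpl. pose proof (pow_le 2 (m - 1) ltac:(lra)).
  assert (1 <= 2 ^ (m - 1)) by (apply pow_R1_Rle; lra). lra.
Qed.

Lemma Rdiv_range01 a c : 0 < c -> 0 <= a < c -> 0 <= a / c < 1.
Proof.
  intros Hc Ha. split.
  - apply Rmult_le_pos; [lra|]. left. apply Rinv_0_lt_compat. exact Hc.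
  - apply (Rmult_lt_reg_r c); [exact Hc|]. unfold Rdiv.
    rewrite Rmult_assoc, Rinv_l, Rmult_1_r, Rmult_1_l by lra. lra.
Qed.

Lemma block_lo_le_iff i j : block_lo i <= block_lo j <-> (i <= j)%nat.
Proof.
  unfold block_lo. rewrite Rdiv_le_mono_pos_iff by exact INR_L_pos.
  split; [apply INR_le|apply le_INR].
Qed.

Lemma decoy_hi_mono i j : (i <= j)%nat -> decoy_hi i <= decoy_hi j.
Proof.
  intros Hij. unfold decoy_hi. apply Rdiv_le_mono_pos_iff; [exact INR_L_pos|].
  apply le_INR in Hij. lra.
Qed.

Lemma block_lo_lt_decoy_hi j : block_lo j < decoy_hi j.
Proof.
  unfold block_lo, decoy_hi. apply Rdiv_lt_mono_pos_iff; [exact INR_L_pos|].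
  pose proof decoy_frac_pos. lra.
Qed.

Lemma decoy_hi_lt_block_lo_S j : decoy_hi j < block_lo (S j).
Proof.
  unfold block_lo, decoy_hi. apply Rdiv_lt_mono_pos_iff; [exact INR_L_pos|].
  rewrite S_INR. pose proof decoy_frac_lt1. lra.
Qed.

Lemma block_lo_range j : (j < L)%nat -> 0 <= block_lo j < 1.
Proof. intros Hj. apply Rdiv_range01; [exact INR_L_pos|]. split; [apply pos_INR|apply lt_INR, Hj]. Qed.

Lemma block_lo_0 : block_lo 0 = 0.
Proof. unfold block_lo. simpl. pose proof INR_L_pos. field. lra. Qed.

Lemma block_lo_L : block_lo L = 1.
Proof. unfold block_lo. pose proof INR_L_pos. field. lra. Qed.

Lemma decoy_hi_range j : (j < L)%nat -> 0 <= decoy_hi j < 1.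
Proof.
  intros Hj. pose proof (block_lo_range j Hj). pose proof (block_lo_lt_decoy_hi j).
  pose proof (decoy_hi_lt_block_lo_S j). pose proof (proj2 (block_lo_le_iff (S j) L) Hj).
  rewrite block_lo_L in *. lra.
Qed.

Lemma gap_spec g : (g < L)%nat ->
  0 <= fst (gap g) /\ fst (gap g) < snd (gap g) /\ snd (gap g) <= 1 /\
  snd (gap g) - fst (gap g) = (1 - decoy_frac) / INR L.
Proof.
  intros Hg. pose proof (decoy_hi_range g Hg). pose proof (decoy_hi_lt_block_lo_S g).
  pose proof (proj2 (block_lo_le_iff (S g) L) Hg). rewrite block_lo_L in *.
  unfold gap. simpl. repeat split; try lra.
  unfold block_lo, decoy_hi. rewrite S_INR. pose proof INR_L_pos. field. lra.
Qed.

Lemma mid_bisect_gap_range g bits : (g < L)%nat -> 0 <= mid (bisect (gap g) bits) < 1.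
Proof.
  intros Hg. destruct (gap_spec g Hg) as [G1 [G2 [G3 _]]].
  destruct (bisect_spec (gap g) bits G2) as [B1 [B2 [B3 _]]].
  pose proof (mid_between _ B2). lra.
Qed.

Lemma hist_block_lt h : (hist_block h < L)%nat.
Proof.
  unfold hist_block, blocks_passed, ntrue.
  pose proof (filter_length_le (fun b : bool => b) (firstn L h)). rewrite length_firstn in *. lia.
Qed.

Lemma seed_gap_lt y : (seed_gap y < L)%nat.
Proof. apply Nat.mod_upper_bound. lia. Qed.

Lemma decoy_query_range k h y : 0 <= decoy_query k h y < 1.
Proof.
  unfold decoy_query, phase1_query, phase2_query.
  destruct (Nat.ltb_spec k (2 * L)); [destruct (Nat.ltb_spec k L)|destruct (hist_in_decoy h)].
  - apply block_lo_range. assumption.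
  - apply decoy_hi_range. lia.
  - apply mid_bisect_gap_range, seed_gap_lt.
  - apply mid_bisect_gap_range, hist_block_lt.
Qed.

Lemma decoy_estimate_range h y : 0 <= decoy_estimate h y < 1.
Proof.
  unfold decoy_estimate. destruct (hist_in_decoy h); [|apply mid_bisect_gap_range, hist_block_lt].
  pose proof (hist_block_lt h) as Hlt. apply lt_INR in Hlt as Hlt'.
  assert (INR (S (hist_block h)) <= INR L) by (apply le_INR; lia). rewrite S_INR in *.
  pose proof decoy_frac_pos. pose proof decoy_frac_lt1. pose proof (pos_INR (hist_block h)).
  apply Rdiv_range01; [exact INR_L_pos|lra].
Qed.

Lemma decoy_nseeds_pos : (0 < L * 2 ^ m)%nat.
Proof. pose proof (Nat.pow_nonzero 2 m ltac:(lia)). lia. Qed.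

Definition decoy_strategy : strategy (2 * L + m) :=
  {| nseeds := L * 2 ^ m; nseeds_pos := decoy_nseeds_pos; qf := decoy_query; est := decoy_estimate;
     qf_range := decoy_query_range; est_range := decoy_estimate_range |}.


Definition nblocks (x : R) : nat := count_le block_lo L x.
Definition ndecoys (x : R) : nat := count_le decoy_hi L x.
Definition in_decoy (x : R) : bool := negb (Nat.eqb (nblocks x) (ndecoys x)).

Lemma queries_upto_phase1 x y k :
  (k <= 2 * L)%nat -> queries_upto decoy_strategy x y k = map phase1_query (seq 0 k).
Proof.
  intros Hk. apply map_ext_in. intros j Hj. apply in_seq in Hj.
  simpl. unfold decoy_query. destruct (Nat.ltb_spec j (2 * L)); [reflexivity|lia].
Qed.

Lemma blocks_passed_hist x y k :
  (2 * L <= k)%nat -> blocks_passed (hist decoy_strategy x y k) = nblocks x.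
Proof.
  intros Hk. unfold blocks_passed. rewrite hist_prefix, hist_resp, queries_upto_phase1, map_map by lia.
  unfold nblocks, count_le. f_equal. apply map_ext_in. intros j Hj. apply in_seq in Hj.
  unfold phase1_query. destruct (Nat.ltb_spec j L); [reflexivity|lia].
Qed.

Lemma decoys_passed_hist x y k :
  (2 * L <= k)%nat -> decoys_passed (hist decoy_strategy x y k) = ndecoys x.
Proof.
  intros Hk. unfold decoys_passed. rewrite firstn_skipn_comm, hist_prefix, hist_resp,
    queries_upto_phase1, map_map by lia.
  rewrite seq_app, map_app, skipn_app, length_map, length_seq, skipn_all2, Nat.sub_diag
    by (rewrite length_map, length_seq; lia).
  rewrite map_seq_shift. unfold ndecoys, count_le. f_equal. apply map_ext_in. intros j Hj.
  apply in_seq in Hj. unfold phase1_query. simpl.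
  destruct (Nat.ltb_spec (L + j) L); [lia|]. rewrite Nat.add_comm, Nat.add_sub. reflexivity.
Qed.

Lemma hist_in_decoy_hist x y k :
  (2 * L <= k)%nat -> hist_in_decoy (hist decoy_strategy x y k) = in_decoy x.
Proof.
  intros Hk. unfold hist_in_decoy. rewrite blocks_passed_hist, decoys_passed_hist by exact Hk.
  reflexivity.
Qed.

Lemma hist_block_hist x y k :
  (2 * L <= k)%nat -> hist_block (hist decoy_strategy x y k) = (nblocks x - 1)%nat.
Proof. intros Hk. unfold hist_block. rewrite blocks_passed_hist by exact Hk. reflexivity. Qed.

Lemma block_lo_mono i j : (i <= j)%nat -> block_lo i <= block_lo j.
Proof. apply block_lo_le_iff. Qed.

Lemma nblocks_spec x : 0 <= x < 1 ->
  (nblocks x - 1 < L)%nat /\ (1 <= nblocks x)%nat /\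
  block_lo (nblocks x - 1) <= x < block_lo (S (nblocks x - 1)).
Proof.
  intros Hx. destruct (count_le_spec block_lo L x block_lo_mono) as [Hle Hspec]. fold (nblocks x) in *.
  assert (Hpos : (0 < nblocks x)%nat) by (apply Hspec; [lia|rewrite block_lo_0; lra]).
  repeat split; [lia|lia|apply Hspec; lia|].
  destruct (Nat.eq_dec (S (nblocks x - 1)) L) as [->|Hne]; [rewrite block_lo_L; lra|].
  apply Rnot_le_lt. intros Hle'. apply Hspec in Hle'; lia.
Qed.

Lemma in_decoy_spec x : 0 <= x < 1 -> in_decoy x = true <-> x < decoy_hi (nblocks x - 1).
Proof.
  intros Hx. destruct (nblocks_spec x Hx) as [B1 [B2 _]].
  destruct (count_le_spec block_lo L x block_lo_mono) as [_ Hb]. fold (nblocks x) in Hb.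
  destruct (count_le_spec decoy_hi L x decoy_hi_mono) as [Hd_le Hd]. fold (ndecoys x) in Hd_le, Hd.
  unfold in_decoy. rewrite Bool.negb_true_iff, Nat.eqb_neq.
  assert (Hdb : (ndecoys x <= nblocks x)%nat).
  { destruct (Nat.le_gt_cases (ndecoys x) (nblocks x)) as [|Hgt]; [assumption|exfalso].
    assert (Hdx : decoy_hi (nblocks x) <= x) by (apply Hd; lia).
    pose proof (block_lo_lt_decoy_hi (nblocks x)).
    assert (Hbx : (nblocks x < nblocks x)%nat) by (apply Hb; [lia|lra]). lia. }
  split.
  - intros Hne. apply Rnot_le_lt. intros Hle. apply Hd in Hle; lia.
  - intros Hlt Heq. apply (Rlt_not_le _ _ Hlt), Hd; lia.
Qed.

Definition query_pattern (g : nat) (bits : list bool) : list R :=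
  map phase1_query (seq 0 (2 * L)) ++ map (fun i => mid (bisect (gap g) (firstn i bits))) (seq 0 m).

Definition run_gap (x : R) (y : nat) : nat := if in_decoy x then seed_gap y else (nblocks x - 1)%nat.
Definition run_bits (x : R) (y : nat) : list bool :=
  if in_decoy x then seed_bits y m else skipn (2 * L) (hist decoy_strategy x y (2 * L + m)).

Lemma seed_bits_prefix y i : (i <= m)%nat -> seed_bits y i = firstn i (seed_bits y m).
Proof. intros Hi. unfold seed_bits. rewrite firstn_map, firstn_seq by exact Hi. reflexivity. Qed.

Lemma queries_decoy_strategy x y :
  queries decoy_strategy x y = query_pattern (run_gap x y) (run_bits x y).
Proof.
  unfold queries, query_pattern. rewrite seq_app, map_app. f_equal.
  - apply map_ext_in. intros j Hj. apply in_seq in Hj. cbn [qf decoy_strategy]. unfold decoy_query.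
    destruct (Nat.ltb_spec j (2 * L)); [reflexivity|lia].
  - rewrite map_seq_shift. apply map_ext_in. intros i Hi. apply in_seq in Hi.
    cbn [qf decoy_strategy]. unfold decoy_query. rewrite Nat.add_0_l.
    destruct (Nat.ltb_spec (2 * L + i) (2 * L)); [lia|].
    replace (2 * L + i - 2 * L)%nat with i by lia. unfold phase2_query.
    rewrite hist_in_decoy_hist, hist_block_hist by lia. unfold run_gap, run_bits.
    destruct (in_decoy x); [rewrite seed_bits_prefix by lia; reflexivity|].
    rewrite <- (hist_prefix decoy_strategy x y (2 * L + i) (2 * L + m)) by lia.
    rewrite skipn_firstn_comm, firstn_firstn. do 4 f_equal. lia.
Qed.

Lemma run_bits_length x y : length (run_bits x y) = m.
Proof.
  unfold run_bits. destruct (in_decoy x).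
  - unfold seed_bits. rewrite length_map, length_seq. reflexivity.
  - rewrite length_skipn, hist_length. lia.
Qed.

Lemma run_gap_lt x y : 0 <= x < 1 -> (run_gap x y < L)%nat.
Proof.
  intros Hx. unfold run_gap. destruct (in_decoy x); [apply seed_gap_lt|apply nblocks_spec, Hx].
Qed.

Lemma run_bits_nth x y i : in_decoy x = false -> (i < m)%nat ->
  nth i (run_bits x y) false = resp x (mid (bisect (gap (nblocks x - 1)) (firstn i (run_bits x y)))).
Proof.
  intros Hdec Hi.
  assert (Hq : nth (2 * L + i) (queries decoy_strategy x y) 0
             = mid (bisect (gap (nblocks x - 1)) (firstn i (run_bits x y)))).
  { rewrite queries_decoy_strategy. unfold query_pattern, run_gap. rewrite Hdec.
    rewrite app_nth2, length_map, length_seq, Nat.add_comm, Nat.add_sub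
      by (rewrite length_map, length_seq; lia).
    rewrite nth_indep with (d' := mid (bisect (gap (nblocks x - 1)) (firstn 0 (run_bits x y))))
      by (rewrite length_map, length_seq; lia).
    rewrite (map_nth (fun j => mid (bisect (gap (nblocks x - 1)) (firstn j (run_bits x y))))
      (seq 0 m) 0%nat i), seq_nth by exact Hi. reflexivity. }
  rewrite <- Hq. unfold run_bits at 1. rewrite Hdec, nth_skipn, hist_resp.
  rewrite nth_indep with (d' := resp x 0) by (rewrite length_map, queries_upto_length; lia).
  rewrite map_nth. reflexivity.
Qed.

Lemma bisection_tracks_point x y : 0 <= x < 1 -> in_decoy x = false ->
  forall i, (i <= m)%nat ->
  fst (bisect (gap (nblocks x - 1)) (firstn i (run_bits x y))) <= x <
  snd (bisect (gap (nblocks x - 1)) (firstn i (run_bits x y))).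
Proof.
  intros Hx Hdec. induction i as [|i IH]; intros Hi.
  - destruct (nblocks_spec x Hx) as [_ [_ [_ Hlt]]].
    assert (Hge : ~ x < decoy_hi (nblocks x - 1))
      by (rewrite <- in_decoy_spec, Hdec by exact Hx; discriminate).
    simpl. split; [apply Rnot_lt_le, Hge|exact Hlt].
  - specialize (IH ltac:(lia)).
    rewrite (firstn_S_nth _ i false) by (rewrite run_bits_length; lia).
    rewrite bisect_snoc, run_bits_nth by (assumption || lia).
    unfold halve, resp, mid in *. destruct (Rle_dec _ x); simpl; lra.
Qed.

Lemma xhat_decoy_strategy x y : xhat decoy_strategy x y =
  if in_decoy x then (INR (nblocks x - 1) + decoy_frac / 2) / INR L
  else mid (bisect (gap (nblocks x - 1)) (run_bits x y)).
Proof.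
  unfold xhat. cbn [est decoy_strategy]. unfold decoy_estimate.
  rewrite hist_in_decoy_hist, hist_block_hist by lia.
  unfold run_bits. destruct (in_decoy x); reflexivity.
Qed.

Lemma decoy_strategy_accurate eps x y : / (INR L * 2 ^ m) <= eps -> 0 <= x < 1 ->
  Rabs (xhat decoy_strategy x y - x) <= eps / 2.
Proof.
  intros Heps Hx. rewrite xhat_decoy_strategy.
  pose proof INR_L_pos. pose proof decoy_frac_pos. pose proof decoy_frac_lt1.
  assert (Hunit : decoy_frac / INR L = / (INR L * 2 ^ m))
    by (unfold decoy_frac; field; split; [apply pow_nonzero|]; lra).
  destruct (nblocks_spec x Hx) as [B1 [_ [B3 _]]].
  destruct (in_decoy x) eqn:Hdec.
  - apply in_decoy_spec in Hdec; [|exact Hx].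
    unfold block_lo, decoy_hi in *. set (b := INR (nblocks x - 1)) in *.
    assert (E1 : (b + decoy_frac / 2) / INR L - (b + decoy_frac) / INR L = - (decoy_frac / INR L) / 2)
      by (field; lra).
    assert (E2 : (b + decoy_frac / 2) / INR L - b / INR L = (decoy_frac / INR L) / 2)
      by (field; lra).
    apply Rabs_le. lra.
  - destruct (gap_spec _ B1) as [_ [G2 [_ Gw]]].
    pose proof (bisection_tracks_point x y Hx Hdec m (le_n m)) as Htrack.
    rewrite firstn_all2 in Htrack by (rewrite run_bits_length; lia).
    destruct (bisect_spec _ (run_bits x y) G2) as [_ [_ [_ Kw]]].
    rewrite run_bits_length, Gw in Kw.
    assert (Hw : (1 - decoy_frac) / INR L / 2 ^ m <= eps).
    { replace ((1 - decoy_frac) / INR L / 2 ^ m) with ((1 - decoy_frac) * (decoy_frac / INR L))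
        by (unfold decoy_frac; field; split; [apply pow_nonzero|]; lra).
      assert (0 < decoy_frac / INR L) by (apply Rdiv_lt_0_compat; lra). nra. }
    unfold mid. apply Rabs_le. lra.
Qed.

Lemma block_lo_lt_iff i j : block_lo i < block_lo j <-> (i < j)%nat.
Proof.
  unfold block_lo. rewrite Rdiv_lt_mono_pos_iff by exact INR_L_pos.
  split; [apply INR_lt|apply lt_INR].
Qed.

Lemma decoy_hi_lt_iff i j : decoy_hi i < decoy_hi j <-> (i < j)%nat.
Proof.
  unfold decoy_hi. rewrite Rdiv_lt_mono_pos_iff by exact INR_L_pos.
  split; intros H; [apply INR_lt; lra|apply lt_INR in H; lra].
Qed.

(* The phase-1 queries interleave as [block_lo 0 < decoy_hi 0 < block_lo 1 < ...]. *)
Lemma block_lo_neq_decoy_hi i j : block_lo i <> decoy_hi j.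
Proof.
  intros Heq. pose proof (block_lo_lt_decoy_hi j). pose proof (decoy_hi_lt_block_lo_S j).
  assert (Hji : (j < i)%nat) by (apply block_lo_lt_iff; lra).
  assert (Hij : (i < S j)%nat) by (apply block_lo_lt_iff; lra). lia.
Qed.

Lemma phase1_query_inj j j' : (j < 2 * L)%nat -> (j' < 2 * L)%nat ->
  phase1_query j = phase1_query j' -> j = j'.
Proof.
  intros Hj Hj' Heq. unfold phase1_query in Heq.
  destruct (Nat.ltb_spec j L), (Nat.ltb_spec j' L).
  - destruct (Nat.lt_total j j') as [Hlt|[|Hlt]]; [|assumption|];
      apply block_lo_lt_iff in Hlt; lra.
  - exfalso. exact (block_lo_neq_decoy_hi _ _ Heq).
  - exfalso. exact (block_lo_neq_decoy_hi _ _ (eq_sym Heq)).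
  - destruct (Nat.lt_total (j - L) (j' - L)) as [Hlt|[|Hlt]]; [| lia |];
      apply decoy_hi_lt_iff in Hlt; lra.
Qed.

Lemma phase1_query_not_in_gap j g : ~ (fst (gap g) < phase1_query j < snd (gap g)).
Proof.
  unfold gap, phase1_query. simpl. intros [Hlo Hhi].
  pose proof (block_lo_lt_decoy_hi g) as Hg.
  destruct (Nat.ltb_spec j L).
  - assert (g < j)%nat by (apply block_lo_lt_iff; lra).
    assert (j < S g)%nat by (apply block_lo_lt_iff; lra). lia.
  - assert (Hgj : (g < j - L)%nat) by (apply decoy_hi_lt_iff; lra).
    pose proof (block_lo_lt_decoy_hi (j - L)).
    assert (S g <= j - L)%nat as Hle by lia. apply block_lo_le_iff in Hle. lra.
Qed.

Lemma query_pattern_NoDup g bits : (g < L)%nat -> length bits = m -> NoDup (query_pattern g bits).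
Proof.
  intros Hg Hbits. destruct (gap_spec g Hg) as [_ [Hgap _]]. apply NoDup_app.
  - apply NoDup_map_NoDup_ForallPairs; [|apply seq_NoDup].
    intros a b Ha Hb. apply in_seq in Ha, Hb. apply phase1_query_inj; lia.
  - apply NoDup_map_NoDup_ForallPairs; [|apply seq_NoDup].
    intros a b Ha Hb Heq. apply in_seq in Ha, Hb.
    destruct (Nat.lt_total a b) as [Hlt|[|Hlt]]; [exfalso| assumption |exfalso].
    + exact (mid_bisect_prefix_neq _ bits a b Hgap ltac:(lia) Heq).
    + exact (mid_bisect_prefix_neq _ bits b a Hgap ltac:(lia) (eq_sym Heq)).
  - intros q Hq1 Hq2. apply in_map_iff in Hq1 as [j [<- _]]. apply in_map_iff in Hq2 as [i [Hi _]].
    destruct (bisect_spec (gap g) (firstn i bits) Hgap) as [K1 [K2 [K3 _]]].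
    pose proof (mid_between _ K2). apply (phase1_query_not_in_gap j g). rewrite <- Hi. lra.
Qed.

(* A point in the decoy part of block [j]; consecutive ones are [(1 + decoy_frac / L) / L > 1 / L]
   apart. *)
Definition decoy_point (j : nat) : R := (INR j + INR j * (decoy_frac / INR L)) / INR L.

Lemma decoy_point_spec j : (j < L)%nat -> block_lo j <= decoy_point j < decoy_hi j.
Proof.
  intros Hj. pose proof INR_L_pos. pose proof decoy_frac_pos.
  assert (HjL : INR j < INR L) by (apply lt_INR, Hj). pose proof (pos_INR j).
  assert (Hr : 0 < decoy_frac / INR L) by (apply Rdiv_lt_0_compat; lra).
  assert (Hjr : INR j * (decoy_frac / INR L) < decoy_frac).
  { replace (INR j * (decoy_frac / INR L)) with (decoy_frac * (INR j / INR L)) by (field; lra).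
    pose proof (Rdiv_range01 (INR j) (INR L) ltac:(lra) ltac:(lra)). nra. }
  unfold decoy_point, block_lo, decoy_hi.
  rewrite Rdiv_le_mono_pos_iff, Rdiv_lt_mono_pos_iff by lra. nra.
Qed.

Lemma decoy_point_range j : (j < L)%nat -> 0 <= decoy_point j < 1.
Proof.
  intros Hj. pose proof (decoy_point_spec j Hj). pose proof (block_lo_range j Hj).
  pose proof (decoy_hi_range j Hj). lra.
Qed.

Lemma nblocks_decoy_point j : (j < L)%nat -> (nblocks (decoy_point j) - 1)%nat = j.
Proof.
  intros Hj. destruct (nblocks_spec _ (decoy_point_range j Hj)) as [_ [_ [B3 B4]]].
  destruct (decoy_point_spec j Hj) as [Z1 Z2]. pose proof (decoy_hi_lt_block_lo_S j).
  destruct (Nat.lt_total (nblocks (decoy_point j) - 1) j) as [Hlt|[|Hlt]]; [exfalso|assumption|exfalso].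
  - apply Nat.le_succ_l, block_lo_le_iff in Hlt. lra.
  - apply Nat.le_succ_l, block_lo_le_iff in Hlt. lra.
Qed.

Lemma in_decoy_decoy_point j : (j < L)%nat -> in_decoy (decoy_point j) = true.
Proof.
  intros Hj. apply in_decoy_spec; [apply decoy_point_range, Hj|].
  rewrite nblocks_decoy_point by exact Hj. apply decoy_point_spec, Hj.
Qed.

Lemma seed_decode g n k : (g < L)%nat ->
  seed_gap (S (g + n * L)) = g /\ seed_bits (S (g + n * L)) k = map (Nat.testbit n) (seq 0 k).
Proof.
  intros Hg. unfold seed_gap, seed_bits. rewrite Nat.sub_1_r, Nat.pred_succ. split.
  - rewrite Nat.Div0.mod_add. apply Nat.mod_small, Hg.
  - rewrite Nat.div_add, Nat.div_small by lia. reflexivity.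
Qed.

(* Every decoy point can produce the observed query sequence: pick the seed encoding the gap
   and the path of that run. *)
Lemma decoy_point_in_info_set x y j : 0 <= x < 1 -> (j < L)%nat ->
  info_set decoy_strategy (queries decoy_strategy x y) (decoy_point j).
Proof.
  intros Hx Hj. split; [apply decoy_point_range, Hj|].
  destruct (testbits_surjective (run_bits x y)) as [n [Hn Hbits]]. rewrite run_bits_length in Hn, Hbits.
  pose proof (run_gap_lt x y Hx) as Hg.
  destruct (seed_decode (run_gap x y) n m Hg) as [Dg Db].
  apply seed_prob_pos. exists (S (run_gap x y + n * L)). split.
  - cbn [nseeds decoy_strategy]. assert (n * L + L <= 2 ^ m * L)%nat by nia. nia.
  - rewrite !queries_decoy_strategy. unfold run_gap at 1, run_bits at 1.
    rewrite in_decoy_decoy_point, Dg, Db, Hbits by exact Hj. reflexivity.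
Qed.

Lemma decoy_points_separated delta j j' : delta <= 1 / INR L -> j <> j' ->
  delta < Rabs (decoy_point j - decoy_point j').
Proof.
  intros Hd Hne. pose proof INR_L_pos. pose proof decoy_frac_pos.
  assert (Hr : 0 < decoy_frac / INR L) by (apply Rdiv_lt_0_compat; lra).
  assert (Hsp : 1 / INR L < (1 + decoy_frac / INR L) / INR L) by (apply Rdiv_lt_mono_pos_iff; lra).
  replace (decoy_point j - decoy_point j') with ((INR j - INR j') * ((1 + decoy_frac / INR L) / INR L))
    by (unfold decoy_point; field; lra).
  rewrite Rabs_mult, (Rabs_right ((1 + decoy_frac / INR L) / INR L))
    by (apply Rle_ge, Rlt_le, Rdiv_lt_0_compat; lra).
  pose proof (Rabs_INR_sub_ge1 j j' Hne). pose proof (Rdiv_lt_0_compat 1 (INR L) ltac:(lra) H). nra.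
Qed.

Lemma decoy_strategy_private eps delta :
  / (INR L * 2 ^ m) <= eps -> 0 < delta -> delta <= 1 / INR L -> is_private decoy_strategy eps delta L.
Proof.
  intros Heps Hd HdL. split; [|split].
  - intros x y Hx _. rewrite queries_decoy_strategy.
    apply query_pattern_NoDup; [apply run_gap_lt, Hx|apply run_bits_length].
  - intros x Hx. apply seed_prob_eq1. intros y _. apply decoy_strategy_accurate; assumption.
  - intros x Q Hx HQ. apply seed_prob_pos in HQ as [y [_ <-]].
    destruct (coverable_unit_interval (info_set decoy_strategy (queries decoy_strategy x y)) delta Hd
      (fun z Hz => proj1 Hz)) as [n Hn].
    apply (coverable_separated (info_set decoy_strategy (queries decoy_strategy x y)) delta _
      decoy_point L); [| |exact (proj1 (cover_number_spec _ _ _ Hn))].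
    + intros j Hj. apply decoy_point_in_info_set; assumption.
    + intros j j' _ _ Hne. apply decoy_points_separated; assumption.
Qed.

End DecoyStrategy.

Lemma Nstar_spec eps delta L N (s : strategy N) : is_private s eps delta L ->
  (exists s' : strategy (Nstar eps delta L), is_private s' eps delta L) /\ (Nstar eps delta L <= N)%nat.
Proof.
  intros Hs. unfold Nstar.
  destruct (epsilon_spec (inhabits 0%nat)
    (fun N => (exists s : strategy N, is_private s eps delta L) /\
              forall N', (exists s : strategy N', is_private s eps delta L) -> (N <= N')%nat)
    (nat_least_exists _ (ex_intro _ N (ex_intro _ s Hs)))) as [Hex Hmin].
  split; [exact Hex|]. apply Hmin. exists s. exact Hs.
Qed.

Lemma Rceil_ge v : v <= IZR (Rceil v).
Proof. unfold Rceil. destruct (archimed (- v)). rewrite opp_IZR, minus_IZR. lra. Qed.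

Lemma Rceil_le v z : v <= IZR z -> (Rceil v <= z)%Z.
Proof.
  intros Hv. unfold Rceil. destruct (archimed (- v)) as [Hup _].
  assert (Hlt : (- z < up (- v))%Z) by (apply lt_IZR; rewrite opp_IZR; lra). lia.
Qed.

Lemma ln2_pos : 0 < ln 2.
Proof. rewrite <- ln_1. apply ln_increasing; lra. Qed.

Lemma ln_le_iff x y : 0 < x -> 0 < y -> ln x <= ln y <-> x <= y.
Proof.
  intros Hx Hy. split; intros H.
  - apply Rnot_lt_le. intros Hlt. apply (Rlt_not_le _ _ (ln_increasing y x Hy Hlt)), H.
  - destruct H as [H| ->]; [left; apply ln_increasing; assumption|right; reflexivity].
Qed.

Lemma log2_le_iff a n : 0 < a -> log2 a <= INR n <-> a <= 2 ^ n.
Proof.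
  intros Ha. pose proof ln2_pos. unfold log2.
  replace (INR n) with (INR n * ln 2 / ln 2) at 1 by (field; lra).
  rewrite Rdiv_le_mono_pos_iff, <- ln_pow, ln_le_iff by (try apply pow_lt; lra). reflexivity.
Qed.

Lemma log2_pos a : 1 < a -> 0 < log2 a.
Proof. intros Ha. apply Rdiv_lt_0_compat; [rewrite <- ln_1; apply ln_increasing|apply ln2_pos]; lra. Qed.

Lemma ceil_log2_le a n : 0 < a -> a <= 2 ^ n -> IZR (Rceil (log2 a)) <= INR n.
Proof.
  intros Ha Hn. rewrite INR_IZR_INZ. apply IZR_le, Rceil_le. rewrite <- INR_IZR_INZ.
  apply log2_le_iff; assumption.
Qed.

Lemma pow_ceil_log2 a : 1 < a ->
  (1 <= Z.to_nat (Rceil (log2 a)))%nat /\ INR (Z.to_nat (Rceil (log2 a))) = IZR (Rceil (log2 a)) /\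
  a <= 2 ^ Z.to_nat (Rceil (log2 a)).
Proof.
  intros Ha. pose proof (Rceil_ge (log2 a)) as Hge. pose proof (log2_pos a Ha).
  assert (Hpos : (0 < Rceil (log2 a))%Z) by (apply lt_IZR; simpl; lra).
  assert (Hn : INR (Z.to_nat (Rceil (log2 a))) = IZR (Rceil (log2 a)))
    by (rewrite INR_IZR_INZ, Z2Nat.id by lia; reflexivity).
  repeat split; [lia|exact Hn|]. apply log2_le_iff; [lra|]. rewrite Hn. exact Hge.
Qed.

Lemma Nstar_lower_bound {N} (s : strategy N) eps delta L :
  0 < eps -> (2 <= L)%nat -> 2 * eps < delta -> delta < 1 -> is_private s eps delta L ->
  Rmax (IZR (Rceil (log2 (1 / eps)))) (IZR (Rceil (log2 (delta / eps))) + 2 * INR L - 4) <= INR N.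
Proof.
  intros Heps HL Hed Hd1 Hs.
  destruct (private_lower_bounds s eps delta L Heps Hed Hd1 Hs) as [H1 [H2 H3]].
  apply Rmax_lub.
  - apply ceil_log2_le; [apply Rdiv_lt_0_compat; lra|].
    apply (Rmult_le_reg_r eps); [exact Heps|]. unfold Rdiv. rewrite Rmult_assoc, Rinv_l; lra.
  - assert (Hc : IZR (Rceil (log2 (delta / eps))) <= INR (N - (2 * L - 4))).
    { apply ceil_log2_le; [apply Rdiv_lt_0_compat; lra|].
      apply (Rmult_le_reg_r eps); [exact Heps|]. unfold Rdiv. rewrite Rmult_assoc, Rinv_l; lra. }
    rewrite !minus_INR, mult_INR in Hc by lia. simpl (INR 2) in Hc. simpl (INR 4) in Hc. lra.
Qed.

Lemma Nstar_upper_bound eps delta L :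
  0 < eps -> 0 < delta -> (2 <= L)%nat -> 2 * eps < delta -> delta <= 1 / INR L ->
  (exists s : strategy (Nstar eps delta L), is_private s eps delta L) /\
  INR (Nstar eps delta L) <= IZR (Rceil (log2 (1 / (INR L * eps)))) + 2 * INR L.
Proof.
  intros Heps Hd HL Hed HdL.
  assert (HL2 : 2 <= INR L) by (apply (le_INR 2) in HL; simpl in HL; lra).
  assert (HLeps : 0 < INR L * eps < 1 / 2).
  { split; [nra|]. apply (Rmult_le_compat_l (INR L)) in HdL; [|lra].
    replace (INR L * (1 / INR L)) with 1 in HdL by (field; lra). nra. }
  assert (Ha : 1 < 1 / (INR L * eps)).
  { apply (Rmult_lt_reg_r (INR L * eps)); [lra|]. unfold Rdiv. rewrite Rmult_assoc, Rinv_l; lra. }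
  destruct (pow_ceil_log2 _ Ha) as [Hm [Hmeq Hpow]].
  set (m := Z.to_nat (Rceil (log2 (1 / (INR L * eps))))) in *.
  assert (Hunit : / (INR L * 2 ^ m) <= eps).
  { assert (0 < 2 ^ m) by (apply pow_lt; lra).
    apply (Rmult_le_compat_r (INR L * eps)) in Hpow; [|lra].
    unfold Rdiv in Hpow. rewrite Rmult_1_l, Rinv_l in Hpow by lra.
    rewrite Rinv_mult. apply (Rmult_le_reg_l (INR L * 2 ^ m)); [nra|].
    replace (INR L * 2 ^ m * (/ INR L * / 2 ^ m)) with 1 by (field; lra). nra. }
  destruct (Nstar_spec eps delta L _ _ (decoy_strategy_private L m HL Hm eps delta Hunit Hd HdL))
    as [Hex Hle].
  split; [exact Hex|]. apply le_INR in Hle.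
  rewrite plus_INR, mult_INR, Hmeq in Hle. simpl (INR 2) in Hle. lra.
Qed.

Theorem theorem1 (eps delta : R) (L : nat) :
  0 < eps -> 0 < delta -> (2 <= L)%nat ->
  2 * eps < delta -> delta <= 1 / INR L ->
  Rmax (IZR (Rceil (log2 (1 / eps))))
       (IZR (Rceil (log2 (delta / eps))) + 2 * INR L - 4)
    <= INR (Nstar eps delta L)
  /\ INR (Nstar eps delta L)
    <= IZR (Rceil (log2 (1 / (INR L * eps)))) + 2 * INR L.
Proof.
  intros Heps Hd HL Hed HdL.
  destruct (Nstar_upper_bound eps delta L Heps Hd HL Hed HdL) as [[s Hs] Hupper].
  split; [|exact Hupper].
  apply (Nstar_lower_bound s eps delta L Heps HL Hed); [|exact Hs].
  assert (HL2 : 2 <= INR L) by (apply (le_INR 2) in HL; simpl in HL; lra).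
  apply Rle_lt_trans with (1 / INR L); [exact HdL|].
  apply Rdiv_range01; lra.
Qed.
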